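(* Let $f_1,f_2:\mathbb R^d\to\mathbb R$ be convex with $\nabla f_i$ globally Lipschitz continuous with modulus $L_i>0$ ($i=1,2$), let $f_3:\mathbb R^d\to\mathbb R\cup\{+\infty\}$ be proper and lower semicontinuous, and assume $\varphi:=f_1+f_2+f_3$ has a nonempty set of minimizers. Let $\gamma\in(0,\frac{1}{L_1+L_2})$ and $\lambda,\alpha>0$. Given $(z_1,z_2)\in\mathbb R^d\times\mathbb R^d$, let $x_1=\mathrm{prox}_{\gamma f_1}(z_1)$, $x_2=\mathrm{prox}_{\frac{\gamma}{\alpha}f_2}(\frac{z_2}{\alpha}+x_1)$ and $x_3\in\mathrm{prox}_{\gamma f_3}(x_1-z_1+x_2-z_2)$. Then: (i) with $\gamma_1=\gamma/\alpha$ and $\gamma_2=\gamma/(1-\alpha)$, $$\varphi_\gamma^{\mathrm{Ryu}}(z_1,z_2)\le\min\Big\{\varphi(x_1)+\tfrac12\big(L_2+\tfrac{1}{\gamma_2}\big)\|x_1-x_2\|^2,\ \varphi(x_2)+\tfrac12\big(L_1+\tfrac{1}{\gamma_1}\big)\|x_1-x_2\|^2\Big\};$$ (ii) $\varphi_\gamma^{\mathrm{Ryu}}(z_1,z_2)\ge\varphi(x_3)+\frac{\alpha-\gamma L_1}{2\gamma}\|x_3-x_1\|^2+\frac{(1-\alpha)-\gamma L_2}{2\gamma}\|x_3-x_2\|^2$; (iii) if $\alpha\in(0,1)$ and $\gamma\le\min\{\frac{\alpha}{L_1},\frac{1-\alpha}{L_2}\}$, then $\varphi_\gamma^{\mathr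m{Ryu}}(z_1,z_2)\ge\varphi(x_3)$.
   Context: For $h:\mathbb R^d\to\mathbb R\cup\{+\infty\}$ and $\gamma>0$, $\mathrm{prox}_{\gamma h}(z):=\operatorname{argmin}_{y}\{h(y)+\frac{1}{2\gamma}\|y-z\|^2\}$. Conventions $\frac{c}{0}=\infty$, $\frac{d}{\infty}=0$ ($c>0,d\in\mathbb R$). With $x_1,x_2$ as in the claim and $\gamma_1=\gamma/\alpha$, $\gamma_2=\gamma/(1-\alpha)$, the relaxed Ryu envelope is $$\varphi_\gamma^{\mathrm{Ryu}}(z_1,z_2):=\min_{y\in\mathbb R^d}\Big\{f_3(y)+\sum_{i=1}^2\Big[f_i(x_i)+\langle y-x_i,\nabla f_i(x_i)\rangle+\frac{1}{2\gamma_i}\|y-x_i\|^2\Big]\Big\}.$$ *)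

From HB Require Import structures.
From mathcomp Require Import all_boot all_order all_algebra.
From mathcomp Require Import all_classical all_reals all_analysis.
Set Implicit Arguments. Unset Strict Implicit. Unset Printing Implicit Defensive.
Import Order.TTheory GRing.Theory Num.Theory.
Import numFieldNormedType.Exports.
Local Open Scope ring_scope.

Section Defs.
Variables (R : realType) (d : nat).
Implicit Types (x y z : 'rV[R]_d).

Definition dotp x y : R := \sum_(i < d) x ord0 i * y ord0 i.
Definition sqnorm x : R := dotp x x.
Definition enorm x : R := Num.sqrt (sqnorm x).

Definition convex_fun (f : 'rV[R]_d -> R) :=
  forall x y (t : R), 0 <= t -> t <= 1 ->
    f (t *: x + (1 - t) *: y) <= t * f x + (1 - t) * f y.

Definition is_gradient (f : 'rV[R]_d -> R) (g : 'rV[R]_d -> 'rV[R]_d) :=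
  forall x, differentiable f x /\ forall v, 'd f x v = dotp (g x) v.

Definition lipschitz_mod (g : 'rV[R]_d -> 'rV[R]_d) (L : R) :=
  forall x y, enorm (g x - g y) <= L * enorm (x - y).

Definition proper_fun (h : 'rV[R]_d -> \bar R) :=
  (exists x, h x < +oo)%E /\ (forall x, -oo < h x)%E.

Definition is_prox (h : 'rV[R]_d -> \bar R) (gamma : R) z x :=
  forall y, (h x + ((2 * gamma)^-1 * sqnorm (x - z))%:E
             <= h y + ((2 * gamma)^-1 * sqnorm (y - z))%:E)%E.

(* relaxed Ryu envelope; coefficient 1/(2 gamma_1) = alpha/(2 gamma),
   1/(2 gamma_2) = (1-alpha)/(2 gamma) (with the convention 1/oo = 0) *)
Definition ryu_env (f1 f2 : 'rV[R]_d -> R) (g1 g2 : 'rV[R]_d -> 'rV[R]_d)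
  (f3 : 'rV[R]_d -> \bar R) (gamma alpha : R) (x1 x2 : 'rV[R]_d) : \bar R :=
  ereal_inf (range (fun y => (f3 y +
     (f1 x1 + dotp (y - x1) (g1 x1) + alpha / (2 * gamma) * sqnorm (y - x1)
    + (f2 x2 + dotp (y - x2) (g2 x2)
       + (1 - alpha) / (2 * gamma) * sqnorm (y - x2)))%:E)%E)).

End Defs.

From HB Require Import structures.
From mathcomp Require Import all_boot all_order all_algebra.
From mathcomp Require Import all_classical all_reals all_analysis.
From mathcomp Require Import ring lra.
Import Order.TTheory GRing.Theory Num.Theory.
Import numFieldNormedType.Exports.
Local Open Scope ring_scope.
Local Open Scope classical_set_scope.

(* The envelope is the infimum of [f3 + m], where [m] is the sum of the two
   quadratic models of [f1] at [x1] and of [f2] at [x2]. The optimality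
   conditions of the first two prox steps express [g1 x1] and [g2 x2] through
   [z1, z2], and with them [m] differs from the prox penalty
   [|y - (x1 - z1 + x2 - z2)|^2 / (2 gamma)] only by a constant; hence [x3]
   minimizes [f3 + m] and the envelope equals [f3 x3 + m x3]. The descent lemma
   bounds [m x3] from below, giving (ii) and then (iii); evaluating [f3 + m] at
   [x1] and [x2] and using the gradient inequality of convex functions gives (i). *)

Local Ltac coordinatewise :=
  rewrite /sqnorm /dotp ?mulr_sumr -?sumrN -?big_split /=;
  apply: eq_bigr => i _; rewrite !mxE; ring.

Section Euclidean.
Context {R : realType} {d : nat}.
Implicit Types (x y z u v : 'rV[R]_d).

Lemma dotpC x y : dotp x y = dotp y x.
Proof. by apply: eq_bigr => i _; rewrite mulrC. Qed.

Lemma dotp0l y : dotp 0 y = 0.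
Proof. by rewrite /dotp big1 // => i _; rewrite mxE mul0r. Qed.

Lemma dotpZr (c : R) x y : dotp x (c *: y) = c * dotp x y.
Proof. coordinatewise. Qed.

Lemma dotpNr x y : dotp x (- y) = - dotp x y.
Proof. coordinatewise. Qed.

Lemma dotpBl x y z : dotp (x - y) z = dotp x z - dotp y z.
Proof. coordinatewise. Qed.

Lemma sqnorm_ge0 x : 0 <= sqnorm x.
Proof. by apply: sumr_ge0 => i _; rewrite -expr2 sqr_ge0. Qed.

Lemma sqnorm_eq0 x : sqnorm x = 0 -> x = 0.
Proof.
move/eqP; rewrite psumr_eq0 => [/allP x0|i _]; last by rewrite -expr2 sqr_ge0.
apply/matrixP => i j; rewrite (ord1 i) mxE.
by have := x0 j (mem_index_enum _); rewrite /= mulf_eq0 orbb => /eqP.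
Qed.

Lemma sqnorm0 : sqnorm (0 : 'rV[R]_d) = 0.
Proof. exact: dotp0l. Qed.

Lemma sqnormBC x y : sqnorm (x - y) = sqnorm (y - x).
Proof. coordinatewise. Qed.

Lemma sqnormZ (c : R) x : sqnorm (c *: x) = c ^+ 2 * sqnorm x.
Proof. coordinatewise. Qed.

Lemma sqnormB x y : sqnorm (x - y) = sqnorm x - 2 * dotp x y + sqnorm y.
Proof. coordinatewise. Qed.

Lemma sqnormDZ x z v (t : R) : sqnorm (x + t *: v - z) =
  sqnorm (x - z) + 2 * t * dotp (x - z) v + t ^+ 2 * sqnorm v.
Proof. coordinatewise. Qed.

Lemma enorm_sqr x : enorm x ^+ 2 = sqnorm x.
Proof. by rewrite sqr_sqrtr // sqnorm_ge0. Qed.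

Lemma dotp_le_of_enorm_le (k : R) v u : 0 < k -> enorm v <= k * enorm u ->
  dotp v u <= k * sqnorm u.
Proof.
move=> k0 vu.
have v_sq : sqnorm v <= k ^+ 2 * sqnorm u.
  rewrite -!enorm_sqr -exprMn ler_pXn2r // ?nnegrE ?sqrtr_ge0 //.
  by rewrite mulr_ge0 ?sqrtr_ge0 // ltW.
have := sqnorm_ge0 (v - k *: u); rewrite sqnormB dotpZr sqnormZ.
nra.
Qed.

Lemma lipschitz_dotp_le {g : 'rV[R]_d -> 'rV[R]_d} {L : R} x y :
  lipschitz_mod g L -> 0 < L -> dotp (g x - g y) (x - y) <= L * sqnorm (x - y).
Proof. by move=> gL L0; apply: dotp_le_of_enorm_le. Qed.

End Euclidean.

Section RightDerivative.
Context {R : realType}.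

Lemma derive_le_of_quadratic_majorant (h : R -> R) (D c e : R) :
  is_derive (0 : R) (1 : R) h D ->
  (forall t, 0 < t < 1 -> h t <= h 0 + t * c + t ^+ 2 * e) -> D <= c.
Proof.
move=> [dh <-] hle.
set q := fun t : R => t^-1 *: ((h \o shift 0) (t *: 1) - h 0).
have q_right : q @ 0^'+ --> 'D_1 h 0.
  apply: cvg_trans dh; apply: cvg_app; apply: within_subset => t /=.
  exact: lt0r_neq0.
have lin_right : (fun t => c + t * e) @ 0^'+ --> c.
  apply: cvg_at_right_filter.
  rewrite -[X in _ --> X]addr0 -[X in _ --> _ + X](mul0r e).
  by apply: cvgD; [exact: cvg_cst | apply: cvgM; [exact: cvg_id | exact: cvg_cst]].
apply: (ler_cvg_to q_right lin_right); near=> t.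
have t_gt0 : 0 < t by near: t; exact: nbhs_right_gt.
have t_lt1 : t < 1 by near: t; exact: nbhs_right_lt.
have := hle t; rewrite t_gt0 t_lt1 => /(_ isT) ht.
rewrite /q /= addr0 [t%:A]mulr1 -[_ *: _]/(t^-1 * _) mulrC ler_pdivrMr //.
nra.
Unshelve. all: by end_near. Qed.
End RightDerivative.

Section SmoothConvex.
Context {R : realType} {d : nat}.
Context {f : 'rV[R]_d -> R} {g : 'rV[R]_d -> 'rV[R]_d}.
Hypothesis hg : is_gradient f g.
Implicit Types (x y z u v : 'rV[R]_d).

Lemma is_derive_line x u (t : R) :
  is_derive t 1 (fun s : R => f (x + s *: u)) (dotp (g (x + t *: u)) u).
Proof.
have [df dfE] := hg (x + t *: u).
have shiftE :
    (fun h : R => h^-1 *: (((fun s => f (x + s *: u)) \o shift t) (h *: 1)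
                           - f (x + t *: u))) =
    (fun h : R => h^-1 *: ((f \o shift (x + t *: u)) (h *: u) - f (x + t *: u))).
  apply/funext => h /=; congr (_ *: (f _ - _)).
  by rewrite [h *: 1]mulr1 scalerDl addrCA addrA.
apply: DeriveDef; first by rewrite /derivable shiftE; exact: diff_derivable.
by rewrite /derive shiftE -/(derive f _ u) deriveE // dfE.
Qed.

Lemma gradient_le_of_convex x y : convex_fun f ->
  f x + dotp (g x) (y - x) <= f y.
Proof.
move=> fcvx; have := is_derive_line x (y - x) 0.
rewrite scale0r addr0 => dfx.
suff : dotp (g x) (y - x) <= f y - f x by lra.
apply: (@derive_le_of_quadratic_majorant _ _ _ _ 0 dfx) => t /andP[t0 t1].
have := fcvx y x t (ltW t0) (ltW t1).
have -> : t *: y + (1 - t) *: x = x + t *: (y - x).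
  by apply/matrixP => i j; rewrite !mxE; ring.
rewrite scale0r addr0 mulr0; lra.
Qed.

Lemma prox_gradient {gamma : R} {z x} : 0 < gamma ->
  is_prox (fun x => (f x)%:E) gamma z x -> g x = gamma^-1 *: (z - x).
Proof.
move=> gamma0 xprox.
have first_order v : - dotp (g x) v <= gamma^-1 * dotp (x - z) v.
  have := is_deriveN (is_derive_line x v 0); rewrite scale0r addr0 => dfx.
  apply: (@derive_le_of_quadratic_majorant _ _ _ _ ((2 * gamma)^-1 * sqnorm v) dfx).
  move=> t /andP[t0 t1]; rewrite !fctE scale0r addr0.
  have := xprox (x + t *: v); rewrite -!EFinD lee_fin sqnormDZ invfM.
  have := sqnorm_ge0 v; have : 0 < gamma^-1 by rewrite invr_gt0.
  nra.
set a := g x - gamma^-1 *: (z - x).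
have a0 : sqnorm a = 0.
  apply/le_anti; rewrite sqnorm_ge0 andbT.
  have := first_order (- a); rewrite !dotpNr.
  have aE : dotp (g x) a + gamma^-1 * dotp (x - z) a = sqnorm a.
    by rewrite /a; coordinatewise.
  lra.
by apply/eqP; rewrite -subr_eq0 -/a; apply/eqP; exact: sqnorm_eq0.
Qed.

Lemma descent_lemma (L : R) x y : lipschitz_mod g L -> 0 < L ->
  f y <= f x + dotp (g x) (y - x) + L / 2 * sqnorm (y - x).
Proof.
move=> gL L0; set u := y - x; set k1 := dotp (g x) u; set k2 := L / 2 * sqnorm u.
pose phi s := f (x + s *: u) - k1 * s - k2 * (s * s).
pose dphi s := dotp (g (x + s *: u)) u - k1 - k2 * (s + s).
have phi' (s : R) : is_derive s 1 phi (dphi s).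
  have id' := is_derive_id s (1 : R).
  apply: is_derive_eq.
    exact: is_deriveB (is_deriveB (is_derive_line x u s) (is_deriveZ k1 id'))
                      (is_deriveZ k2 (is_deriveM id' id')).
  by rewrite /dphi /= ![_%:A]mulr1.
have phi_cont : {within `[0, 1], continuous phi}.
  by apply: derivable_within_continuous => s _; case: (phi' s).
have [c /[!in_itv]/= /andP[c0 c1] phi10] := MVT ltr01 (fun s _ => phi' s) phi_cont.
have dphi_le0 : dphi c <= 0.
  have := lipschitz_dotp_le (x + c *: u) x gL L0.
  rewrite addrAC subrr add0r dotpZr sqnormZ.
  rewrite /dphi /k2 /k1 -dotpBl; nra.
have xuE : x + u = y by rewrite addrC subrK.
move: phi10; rewrite /phi !scale1r !scale0r addr0 xuE; lra.
Qed.

End SmoothConvex.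

Lemma ereal_inf_range_min {R : realType} {T : Type} (F : T -> \bar R) x :
  (forall y, (F x <= F y)%E) -> ereal_inf (range F) = F x.
Proof.
move=> Fmin; apply/le_anti; rewrite ereal_inf_lbound /=; last by exists x.
by apply: le_ereal_inf_tmp => _ [y _ <-].
Qed.

Lemma is_prox_argmin_shift {R : realType} {d : nat} {h : 'rV[R]_d -> \bar R}
    {q : 'rV[R]_d -> R} {gamma : R} {z x : 'rV[R]_d} :
  is_prox h gamma z x ->
  (forall y, q y - (2 * gamma)^-1 * sqnorm (y - z)
             = q x - (2 * gamma)^-1 * sqnorm (x - z)) ->
  forall y, (h x + (q x)%:E <= h y + (q y)%:E)%E.
Proof.
move=> xprox qp y; set p := fun y => (2 * gamma)^-1 * sqnorm (y - z).
have qE y' : q y' = p y' + (q y' - p y') by rewrite addrC subrK.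
rewrite (qE x) (qE y) (qp y) !EFinD !addeA.
by do 2 apply: leeD2r.
Qed.

Definition ryu_model {R : realType} {d : nat} (f1 f2 : 'rV[R]_d -> R)
    (g1 g2 : 'rV[R]_d -> 'rV[R]_d) (gamma alpha : R) (x1 x2 y : 'rV[R]_d) : R :=
  f1 x1 + dotp (y - x1) (g1 x1) + alpha / (2 * gamma) * sqnorm (y - x1)
  + (f2 x2 + dotp (y - x2) (g2 x2) + (1 - alpha) / (2 * gamma) * sqnorm (y - x2)).

Section RyuEnvelope.
Context {R : realType} {d : nat}.
Context {f1 f2 : 'rV[R]_d -> R} {g1 g2 : 'rV[R]_d -> 'rV[R]_d}.
Context {f3 : 'rV[R]_d -> \bar R}.
Context {gamma alpha : R} {x1 x2 : 'rV[R]_d}.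
Hypothesis gamma_gt0 : 0 < gamma.
Hypotheses (hg1 : is_gradient f1 g1) (hg2 : is_gradient f2 g2).

Local Notation model := (ryu_model f1 f2 g1 g2 gamma alpha x1 x2).
Local Notation env := (ryu_env f1 f2 g1 g2 f3 gamma alpha x1 x2).
Local Notation phi x := ((f1 x + f2 x)%:E + f3 x)%E.

Lemma phiD_EFin z (k : R) : (phi z + k%:E = f3 z + (f1 z + f2 z + k)%:E)%E.
Proof. by rewrite addeAC addeC -EFinD. Qed.

Lemma ryu_envE : env = ereal_inf (range (fun y => f3 y + (model y)%:E)%E).
Proof. by []. Qed.

Lemma ryu_env_le y : (env <= f3 y + (model y)%:E)%E.
Proof. by rewrite ryu_envE; apply: ereal_inf_lbound; exists y. Qed.

(* Convexity of [f2] alone already gives this bound without the [L2] term. *)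
Lemma ryu_env_le_x1 (L2 : R) : convex_fun f2 -> 0 <= L2 ->
  (env <= phi x1 + (2^-1 * (L2 + (1 - alpha) / gamma) * sqnorm (x1 - x2))%:E)%E.
Proof.
move=> hf2 L2_ge0; apply: le_trans (ryu_env_le x1) _.
rewrite phiD_EFin leeD2l // lee_fin /ryu_model subrr dotp0l sqnorm0 dotpC invfM.
have := gradient_le_of_convex hg2 x2 x1 hf2; have := sqnorm_ge0 (x1 - x2); nra.
Qed.

Lemma ryu_env_le_x2 (L1 : R) : convex_fun f1 -> 0 <= L1 ->
  (env <= phi x2 + (2^-1 * (L1 + alpha / gamma) * sqnorm (x1 - x2))%:E)%E.
Proof.
move=> hf1 L1_ge0; apply: le_trans (ryu_env_le x2) _.
rewrite phiD_EFin leeD2l // lee_fin /ryu_model subrr dotp0l sqnorm0 dotpC.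
rewrite (sqnormBC x1) invfM.
have := gradient_le_of_convex hg1 x1 x2 hf1; have := sqnorm_ge0 (x2 - x1); nra.
Qed.

Lemma ryu_model_lower_bound (L1 L2 : R) y :
  lipschitz_mod g1 L1 -> lipschitz_mod g2 L2 -> 0 < L1 -> 0 < L2 ->
  f1 y + f2 y + ((alpha - gamma * L1) / (2 * gamma) * sqnorm (y - x1)
    + ((1 - alpha) - gamma * L2) / (2 * gamma) * sqnorm (y - x2)) <= model y.
Proof.
move=> hL1 hL2 L1_gt0 L2_gt0.
have := descent_lemma hg1 L1 x1 y hL1 L1_gt0.
have := descent_lemma hg2 L2 x2 y hL2 L2_gt0.
have coefE (a L : R) : (a - gamma * L) / (2 * gamma) = a / (2 * gamma) - L / 2.
  by field; rewrite gt_eqF.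
rewrite /ryu_model (dotpC (y - x1)) (dotpC (y - x2)) !coefE; lra.
Qed.

Lemma ryu_model_sub_penalty_const z1 z2 y y' :
  alpha != 0 ->
  g1 x1 = gamma^-1 *: (z1 - x1) ->
  g2 x2 = (gamma / alpha)^-1 *: (alpha^-1 *: z2 + x1 - x2) ->
  model y - (2 * gamma)^-1 * sqnorm (y - (x1 - z1 + x2 - z2))
  = model y' - (2 * gamma)^-1 * sqnorm (y' - (x1 - z1 + x2 - z2)).
Proof.
move=> alpha0 g1E g2E.
(* The affine parts cancel by the two gradient identities, the quadratic ones
   because [alpha / (2 gamma) + (1 - alpha) / (2 gamma) = 1 / (2 gamma)]. *)
pose quad y := dotp (y - x1) (g1 x1) + alpha / (2 * gamma) * sqnorm (y - x1)
  + (dotp (y - x2) (g2 x2) + (1 - alpha) / (2 * gamma) * sqnorm (y - x2))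
  - (2 * gamma)^-1 * sqnorm (y - (x1 - z1 + x2 - z2)).
suff : quad y = quad y' by rewrite /quad /ryu_model; lra.
rewrite /quad g1E g2E /sqnorm /dotp ?mulr_sumr -?sumrN -?big_split /=.
apply: eq_bigr => i _; rewrite !mxE.
by field; rewrite alpha0 gt_eqF.
Qed.

Lemma ryu_env_ge {L1 L2 : R} {z1 z2 x3 : 'rV[R]_d} :
  lipschitz_mod g1 L1 -> lipschitz_mod g2 L2 -> 0 < L1 -> 0 < L2 -> 0 < alpha ->
  is_prox (fun x => (f1 x)%:E) gamma z1 x1 ->
  is_prox (fun x => (f2 x)%:E) (gamma / alpha) (alpha^-1 *: z2 + x1) x2 ->
  is_prox f3 gamma (x1 - z1 + x2 - z2) x3 ->
  (phi x3 + ((alpha - gamma * L1) / (2 * gamma) * sqnorm (x3 - x1)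
    + ((1 - alpha) - gamma * L2) / (2 * gamma) * sqnorm (x3 - x2))%:E <= env)%E.
Proof.
move=> hL1 hL2 L1_gt0 L2_gt0 alpha_gt0 hx1 hx2 hx3.
have g1E := prox_gradient hg1 gamma_gt0 hx1.
have g2E := prox_gradient hg2 (divr_gt0 gamma_gt0 alpha_gt0) hx2.
have envE : env = (f3 x3 + (model x3)%:E)%E.
  rewrite ryu_envE; apply: ereal_inf_range_min => y.
  apply: (is_prox_argmin_shift hx3) => {}y.
  exact: ryu_model_sub_penalty_const _ _ _ _ (lt0r_neq0 alpha_gt0) g1E g2E.
rewrite envE phiD_EFin leeD2l // lee_fin.
exact: ryu_model_lower_bound.
Qed.

End RyuEnvelope.

Theorem proposition3 (R : realType) (d : nat)
  (f1 f2 : 'rV[R]_d -> R) (g1 g2 : 'rV[R]_d -> 'rV[R]_d)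
  (f3 : 'rV[R]_d -> \bar R) (L1 L2 : R)
  (hf1 : convex_fun f1) (hf2 : convex_fun f2)
  (hg1 : is_gradient f1 g1) (hg2 : is_gradient f2 g2)
  (hL1 : 0 < L1) (hL2 : 0 < L2)
  (hLip1 : lipschitz_mod g1 L1) (hLip2 : lipschitz_mod g2 L2)
  (hf3p : proper_fun f3) (hf3l : lower_semicontinuous f3)
  (hmin : exists xs : 'rV[R]_d, forall y : 'rV[R]_d,
      ((f1 xs + f2 xs)%:E + f3 xs <= (f1 y + f2 y)%:E + f3 y)%E)
  (gamma lambda alpha : R)
  (hgam : 0 < gamma) (hgamL : gamma < (L1 + L2)^-1)
  (hlam : 0 < lambda) (halp : 0 < alpha)
  (z1 z2 x1 x2 x3 : 'rV[R]_d)
  (hx1 : is_prox (fun x => (f1 x)%:E) gamma z1 x1)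
  (hx2 : is_prox (fun x => (f2 x)%:E) (gamma / alpha) (alpha^-1 *: z2 + x1) x2)
  (hx3 : is_prox f3 gamma (x1 - z1 + x2 - z2) x3) :
  let phi := fun x => ((f1 x + f2 x)%:E + f3 x)%E in
  let env := ryu_env f1 f2 g1 g2 f3 gamma alpha x1 x2 in
  (* (i) *)
  (env <= mine (phi x1 + (2^-1 * (L2 + (1 - alpha) / gamma) * sqnorm (x1 - x2))%:E)
               (phi x2 + (2^-1 * (L1 + alpha / gamma) * sqnorm (x1 - x2))%:E))%E
  (* (ii) *)
  /\ (phi x3 + ((alpha - gamma * L1) / (2 * gamma) * sqnorm (x3 - x1)
      + ((1 - alpha) - gamma * L2) / (2 * gamma) * sqnorm (x3 - x2))%:E <= env)%E
  (* (iii) *)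
  /\ (0 < alpha < 1 -> gamma <= Num.min (alpha / L1) ((1 - alpha) / L2) ->
      (phi x3 <= env)%E).
Proof.
move=> phi env.
have lower_bound := ryu_env_ge hgam hg1 hg2 hLip1 hLip2 hL1 hL2 halp hx1 hx2 hx3.
split; [|split] => //.
- rewrite le_min (ryu_env_le_x1 hg2 L2 hf2 (ltW hL2)).
  by rewrite (ryu_env_le_x2 hg1 L1 hf1 (ltW hL1)).
- move=> /andP[_ alpha_lt1]; rewrite le_min !ler_pdivlMr // => /andP[gL1 gL2].
  apply: le_trans lower_bound; rewrite leeDl // lee_fin.
  by apply: addr_ge0; apply: mulr_ge0;
    rewrite ?sqnorm_ge0 ?divr_ge0 ?subr_ge0 ?mulr_ge0 // ltW.
Qed.
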